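(* Let $A$ be a nonempty finite set of $n$ alternatives and let $C$ be a capacity-wise lexicographic choice rule on $A$ with associated lists $\pi_q=(\succ^q_1,\dots,\succ^q_q)$, $q\in\{1,\dots,n\}$. If for each $q\in\{2,\dots,n\}$ the list $\pi_q$ is obtained by insertion from $\pi_{q-1}$, then $C$ satisfies monotonicity, i.e. $C(S,q)\subseteq C(S,q+1)$ for all nonempty $S\subseteq A$ and $q\in\{1,\dots,n-1\}$.
   Context: A choice rule assigns to each pair $(S,q)$, $S$ a nonempty subset of $A$ and $q\in\{1,\dots,n\}$, a nonempty $C(S,q)\subseteq S$ with $|C(S,q)|\le q$. A priority ordering is a complete, transitive, antisymmetric relation on $A$. $C$ is capacity-wise lexicographic with lists $\pi_q=(\succ^q_1,\dots,\succ^q_q)$ of priority orderings if for each $(S,q)$, $C(S,q)$ is obtained by choosing the $\succ^q_1$-highest element of $S$, then the $\succ^q_2$-highest among the remaining, and so on, until $q$ are chosen or none is left. A list $\pi'=(\succ'_1,\dots,\succ'_{q+1})$ is obtained by insertion from $\pi=(\succ_1,\dots,\succ_q)$ if there is $k\in\{1,\dots,q+1\}$ with $\succ'_l=\succ_l$ for all $l<k$ and $\succ'_l=\succ_{l-1}$ for all $l>k$. *)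

From mathcomp Require Import all_boot.
Set Implicit Arguments. Unset Strict Implicit. Unset Printing Implicit Defensive.

(* A priority ordering on A, as a boolean relation [r x y] meaning
   "x is ranked weakly above y" (x ≻ y or x = y): complete (total),
   transitive, antisymmetric. *)
Definition priority_ordering (A : finType) (r : rel A) : Prop :=
  total r /\ transitive r /\ antisymmetric r.

Definition top_elt (A : finType) (r : rel A) (S : {set A}) : option A :=
  [pick x in S | [forall y in S, r x y]].

Fixpoint lex_choice (A : finType) (pi : seq (rel A)) (S : {set A}) : {set A} :=
  match pi with
  | [::] => set0
  | r :: pi' =>
      match top_elt r S with
      | Some x => x |: lex_choice pi' (S :\ x)
      | None => set0
      end
  end.

Definition choice_rule (A : finType) (C : {set A} -> nat -> {set A}) : Prop :=
  forall S q, S != set0 -> 1 <= q <= #|A| ->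
    [/\ C S q != set0, C S q \subset S & #|C S q| <= q].

Definition capacity_wise_lexicographic (A : finType)
    (C : {set A} -> nat -> {set A}) (pi : nat -> seq (rel A)) : Prop :=
  forall q, 1 <= q <= #|A| ->
    size (pi q) = q /\ (forall i, i < q -> priority_ordering (nth (fun _ _ => true) (pi q) i)) /\
    (forall S, S != set0 -> C S q = lex_choice (pi q) S).

(* pi' is obtained by insertion from pi: some ordering is inserted at some
   position k (0-indexed here, k in 0..size pi), the rest shifting right. *)
Definition obtained_by_insertion (A : finType) (pi pi' : seq (rel A)) : Prop :=
  exists k r, k <= size pi /\ pi' = take k pi ++ r :: drop k pi.

Definition monotonic (A : finType) (C : {set A} -> nat -> {set A}) : Prop :=
  forall S q, S != set0 -> 1 <= q <= #|A| - 1 -> C S q \subset C S q.+1.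

From mathcomp Require Import all_boot.
From mathcomp Require Import zify.
Set Implicit Arguments. Unset Strict Implicit. Unset Printing Implicit Defensive.

(* Inserting an ordering [r] at position [k] leaves the first [k] picks
   unchanged; then [r] picks some [x] from the remaining menu [S], and the
   later orderings act on [S :\ x] instead of [S].  So it suffices that
   deleting one alternative [x] from a menu can only remove [x] from a
   lexicographic choice: [lex_choice pi S \subset x |: lex_choice pi (S :\ x)].
   By induction on [pi]: if the first top [y] of [S] is [x] this is immediate;
   otherwise [y] is still the top of [S :\ x], and the two deletions commute. *)

Section LexicographicChoice.
Variable A : finType.
Implicit Types (r : rel A) (pi : seq (rel A)) (S : {set A}) (x y : A).

Definition priority_list pi :=
  forall i, i < size pi -> priority_ordering (nth (fun _ _ => true) pi i).

Lemma priority_list_cons r pi :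
  priority_list (r :: pi) -> priority_ordering r /\ priority_list pi.
Proof. by move=> pi_r; split=> [|i lt_i]; [apply: (pi_r 0) | apply: (pi_r i.+1)]. Qed.

Lemma top_eltP r S y :
  top_elt r S = Some y -> y \in S /\ forall z, z \in S -> r y z.
Proof. by rewrite /top_elt; case: pickP => // z /andP[zS /forall_inP top_z] [<-]. Qed.

Lemma top_elt_exists r S :
  priority_ordering r -> S != set0 -> exists y, top_elt r S = Some y.
Proof.
move=> [r_total [r_trans _]] S_neq0.
rewrite /top_elt; case: pickP => [y _|no_top]; first by exists y.
have perm_sortS : perm_eq (sort r (enum S)) (enum S) by rewrite perm_sort.
case sortS: (sort r (enum S)) perm_sortS => [|y s] perm_sortS.
  by move/perm_size: perm_sortS; rewrite -cardE => /esym/eqP; rewrite cards_eq0 (negbTE S_neq0).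
have memS z : (z \in y :: s) = (z \in S) by rewrite (perm_mem perm_sortS) mem_enum.
have /negP[] := no_top y; rewrite -memS mem_head; apply/forall_inP => z.
have /allP y_min : all (r y) s.
  by apply: order_path_min => //; have := sort_sorted r_total (enum S); rewrite sortS.
by rewrite -memS in_cons => /predU1P[->|/y_min //]; have := r_total y y; rewrite orbb.
Qed.

Lemma top_elt_eq r S y : priority_ordering r -> y \in S ->
  (forall z, z \in S -> r y z) -> top_elt r S = Some y.
Proof.
move=> r_po yS y_top; have [|z top_z] := top_elt_exists r_po (S := S).
  by apply/set0Pn; exists y.
have [zS z_top] := top_eltP top_z; case: r_po => _ [_ r_anti].
by rewrite top_z; congr Some; apply: r_anti; rewrite z_top // y_top.
Qed.

Lemma lex_choice0 pi : lex_choice pi set0 = set0.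
Proof. by case: pi => //= r pi; rewrite /top_elt; case: pickP => // z; rewrite inE. Qed.

Lemma lex_choice_setD1 pi S x : priority_list pi ->
  lex_choice pi S \subset x |: lex_choice pi (S :\ x).
Proof.
elim: pi S x => [|r pi IHpi] S x pi_po /=; first by rewrite sub0set.
have [r_po pi_po'] := priority_list_cons pi_po.
case top_y: (top_elt r S) => [y|]; last by rewrite sub0set.
have [yS y_top] := top_eltP top_y.
have [<-{x}|neq_yx] := eqVneq y x.
  case top_z: (top_elt r (S :\ y)) => [z|]; first by rewrite setUS // IHpi.
  suff -> : S :\ y = set0 by rewrite lex_choice0 setU0.
  by apply/eqP/contraT => /(top_elt_exists r_po)[z]; rewrite top_z.
have -> : top_elt r (S :\ x) = Some y.
  apply: top_elt_eq => //; first by rewrite !inE neq_yx.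
  by move=> z /setD1P[_]; apply: y_top.
by rewrite setUCA setUS // setDDl [[set x; y]]setUC -setDDl IHpi.
Qed.

Lemma lex_choice_insert pi k r S : priority_list pi -> priority_ordering r ->
  lex_choice pi S \subset lex_choice (take k pi ++ r :: drop k pi) S.
Proof.
elim: k pi S => [|k IHk] pi S pi_po r_po.
  rewrite take0 drop0; have [->|S_neq0] := eqVneq S set0; first by rewrite !lex_choice0.
  have [x /= ->] := top_elt_exists r_po S_neq0; exact: lex_choice_setD1.
case: pi pi_po => [|r' pi] pi_po /=; first by rewrite sub0set.
case: (top_elt r' S) => [y|] //.
by rewrite setUS // IHk //; case: (priority_list_cons pi_po).
Qed.

End LexicographicChoice.

Theorem lemma2 (A : finType) (C : {set A} -> nat -> {set A})
    (pi : nat -> seq (rel A)) :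
  0 < #|A| ->
  choice_rule C ->
  capacity_wise_lexicographic C pi ->
  (forall q, 2 <= q <= #|A| -> obtained_by_insertion (pi q.-1) (pi q)) ->
  monotonic C.
Proof.
move=> _ _ C_lex pi_ins S q S_neq0 /andP[q_gt0 q_lt].
have [size_q [pi_q C_q]] := C_lex q (ltac:(lia)).
have [_ [pi_q1 C_q1]] := C_lex q.+1 (ltac:(lia)).
have [k [r [le_k pi_q1E]]] := pi_ins q.+1 (ltac:(lia)).
rewrite C_q // C_q1 // pi_q1E; apply: lex_choice_insert; first by rewrite /priority_list size_q.
have <- : nth (fun _ _ => true) (pi q.+1) k = r.
  by rewrite pi_q1E nth_cat size_takel // ltnn subnn.
by apply: pi_q1; move: le_k; rewrite /= size_q; lia.
Qed.
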